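(* Let $a_1,a_2,a_3,\dots$ be nonnegative real numbers with $\sum_{j\ge1}a_j=1$, and let $a=\sup\{a_1,a_2,\dots\}$. Then for every $k\ge2$ and $2\le i\le k$, $$\sum_{j_1+\dots+j_i=k}a_{j_1}a_{j_2}\cdots a_{j_i}\le(1-a_k)a,$$ where the sum runs over all $(j_1,\dots,j_i)$ of positive integers with $j_1+\dots+j_i=k$. In particular $\sum_{j_1+\dots+j_i=k}a_{j_1}\cdots a_{j_i}\le a$ for all $k\ge1$ and $1\le i\le k$. *)

From HB Require Import structures.
From mathcomp Require Import all_boot all_order all_algebra.
From mathcomp Require Import all_classical all_reals all_analysis.
Set Implicit Arguments. Unset Strict Implicit. Unset Printing Implicit Defensive.
Import Order.TTheory GRing.Theory Num.Theory.
Local Open Scope ring_scope.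

(* comp_sum a k i = sum over all (j_1,...,j_i) of positive integers with
   j_1 + ... + j_i = k of a j_1 * ... * a j_i.
   Each j_t is <= k, so we range over functions 'I_i -> 'I_k.+1. *)
Definition comp_sum {R : numDomainType} (a : nat -> R) (k i : nat) : R :=
  \sum_(j : {ffun 'I_i -> 'I_k.+1} |
        [forall t, (0 < j t)%N] && ((\sum_(t < i) (j t : nat))%N == k))
    \prod_(t < i) a (j t).

From HB Require Import structures.
From mathcomp Require Import all_boot all_order all_algebra.
From mathcomp Require Import all_classical all_reals all_analysis.
From mathcomp Require Import zify.
Set Implicit Arguments. Unset Strict Implicit. Unset Printing Implicit Defensive.
Import Order.TTheory GRing.Theory Num.Theory.
Import numFieldNormedType.Exports.
Local Open Scope ring_scope.
Local Open Scope classical_set_scope.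

(* Peel off the first part j_1 of a composition of k into i + 1 parts: it is
   determined by the other parts, j_1 = k - (j_2 + ... + j_(i+1)), so
   a_(j_1) <= a, and these other parts all lie in [1, k).  Summing
   a_(j_2) ... a_(j_(i+1)) over such parts with no further constraint gives
   (a_1 + ... + a_(k-1))^i, which is at most 1 - a_k when i >= 1. *)

Section FfunCons.
Variables (T : finType) (i : nat).

Definition ffun_cons (x : T) (g : {ffun 'I_i -> T}) : {ffun 'I_i.+1 -> T} :=
  [ffun t => if unlift ord0 t is Some t' then g t' else x].

Definition ffun_behead (f : {ffun 'I_i.+1 -> T}) : {ffun 'I_i -> T} :=
  [ffun t => f (lift ord0 t)].

Lemma ffun_cons0 x g : ffun_cons x g ord0 = x.
Proof. by rewrite ffunE unlift_none. Qed.

Lemma ffun_consS x g t : ffun_cons x g (lift ord0 t) = g t.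
Proof. by rewrite ffunE liftK. Qed.

Lemma ffun_beheadK x g : ffun_behead (ffun_cons x g) = g.
Proof. by apply/ffunP=> t; rewrite ffunE ffun_consS. Qed.

Lemma ffun_consK (f : {ffun 'I_i.+1 -> T}) :
  ffun_cons (f ord0) (ffun_behead f) = f.
Proof.
by apply/ffunP=> t; rewrite ffunE; case: unliftP => [t'|] ->; rewrite ?ffunE.
Qed.

Lemma big_ffun_cons (R : Type) (idx : R) (op : Monoid.law idx) (F : T -> R) x g :
  \big[op/idx]_(t < i.+1) F (ffun_cons x g t) =
  op (F x) (\big[op/idx]_(t < i) F (g t)).
Proof.
by rewrite big_ord_recl ffun_cons0; under eq_bigr do rewrite ffun_consS.
Qed.

Lemma forall_ffun_cons (P : pred T) x g :
  [forall t, P (ffun_cons x g t)] = P x && [forall t, P (g t)].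
Proof.
apply/forallP/andP => [Pxg | [Px /forallP Pg] t].
  split; first by have := Pxg ord0; rewrite ffun_cons0.
  by apply/forallP => t; have := Pxg (lift ord0 t); rewrite ffun_consS.
by rewrite ffunE; case: unlift.
Qed.

Lemma big_ffun_recl (R : Type) (idx : R) (op : Monoid.com_law idx)
    (F : {ffun 'I_i.+1 -> T} -> R) :
  \big[op/idx]_f F f =
  \big[op/idx]_(x : T) \big[op/idx]_(g : {ffun 'I_i -> T}) F (ffun_cons x g).
Proof.
have cons_bij : bijective (fun p : T * {ffun 'I_i -> T} => ffun_cons p.1 p.2).
  exists (fun f : {ffun 'I_i.+1 -> T} => (f ord0, ffun_behead f)).
    by move=> [x g] /=; rewrite ffun_cons0 ffun_beheadK.
  exact: ffun_consK.
by rewrite (reindex _ (onW_bij _ cons_bij)) pair_bigA.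
Qed.

End FfunCons.

Lemma sum_ord_addn_eq (R : nmodType) (k m : nat) (F : 'I_k.+1 -> R) :
  \sum_(x : 'I_k.+1 | (0 < x)%N && (x + m == k)%N) F x =
  if (m < k)%N then F (inord (k - m)) else 0.
Proof.
case: ltnP => [m_lt_k | k_le_m].
  apply: big_pred1 => x /=; apply/andP/eqP => [[x_gt0 /eqP x_def] | ->].
    by apply/val_inj; rewrite /= inordK; lia.
  by rewrite inordK; lia.
by apply: big_pred0 => x; apply/negP => /andP[x_gt0 /eqP]; lia.
Qed.

Lemma sum_ord_range (R : nmodType) (k : nat) (a : nat -> R) :
  \sum_(j : 'I_k.+1 | (0 < j < k)%N) a j = \sum_(1 <= j < k) a j.
Proof.
by rewrite big_geq_mkord (big_ord_widen_cond k.+1 _ (fun j => a j)).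
Qed.

Lemma comp_sum_recl (R : numDomainType) (a : nat -> R) (k i : nat) :
  comp_sum a k i.+1 =
  \sum_(g : {ffun 'I_i -> 'I_k.+1} | [forall t, (0 < g t)%N])
    \sum_(x : 'I_k.+1 | (0 < x)%N && (x + \sum_(t < i) (g t : nat) == k)%N)
      a x * \prod_(t < i) a (g t).
Proof.
rewrite /comp_sum big_mkcond big_ffun_recl exchange_big [RHS]big_mkcond /=.
apply: eq_bigr => g _; case: ifP => g_pos; last first.
  apply: big1 => x _.
  by rewrite (forall_ffun_cons (fun j : 'I_k.+1 => 0 < j)%N) g_pos andbF.
rewrite [RHS]big_mkcond; apply: eq_bigr => x _.
rewrite (forall_ffun_cons (fun j : 'I_k.+1 => 0 < j)%N) g_pos andbT.
rewrite (big_ffun_cons _ (fun j : 'I_k.+1 => j : nat)).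
by rewrite (big_ffun_cons _ (fun j : 'I_k.+1 => a j)).
Qed.

Section CompSumBound.
Variables (R : numDomainType) (a : nat -> R) (s : R).
Hypotheses (a_ge0 : forall j, (0 < j)%N -> 0 <= a j)
           (a_le : forall j, (0 < j)%N -> a j <= s).

Lemma comp_sum_le k i :
  comp_sum a k i.+1 <= s * (\sum_(1 <= j < k) a j) ^+ i.
Proof.
have s_ge0 : 0 <= s by apply: le_trans (@a_ge0 1%N isT) (@a_le 1%N isT).
have prod_ge0 (g : {ffun 'I_i -> 'I_k.+1}) :
    [forall t, (0 < g t)%N] -> 0 <= \prod_(t < i) a (g t).
  by move/forallP=> g_pos; apply: prodr_ge0 => t _; apply: a_ge0.
rewrite comp_sum_recl -sum_ord_range -[in X in _ * X](card_ord i) -prodr_const.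
rewrite bigA_distr_big mulr_sumr /=.
rewrite big_mkcond [leRHS]big_mkcond /=; apply: ler_sum => g _.
rewrite sum_ord_addn_eq; set rhs := (X in _ <= X).
have rhs_ge0 : 0 <= rhs.
  rewrite /rhs; case: ifP => [/ffun_onP g_in | _] //.
  rewrite mulr_ge0 // prodr_ge0 // => t _.
  by apply: a_ge0; case/andP: (g_in t).
case: ifP => [g_pos | _] //; case: ifP => [sum_lt | _] //.
have g_in : g \in ffun_on (fun j : 'I_k.+1 => (0 < j < k)%N).
  apply/ffun_onP => t; apply/andP; split; first exact: (forallP g_pos t).
  by apply: leq_ltn_trans sum_lt; rewrite (bigD1 t) //= leq_addr.
rewrite /rhs g_in ler_wpM2r ?prod_ge0 // a_le // inordK; lia.
Qed.
End CompSumBound.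

Lemma partial_sum_le_lim (R : realType) (a : nat -> R) (m : nat) (l : R) :
  (forall j, (m <= j)%N -> 0 <= a j) ->
  (\sum_(m <= j < n) a j) @[n --> \oo] --> l ->
  forall n, \sum_(m <= j < n) a j <= l.
Proof.
move=> a_ge0 a_sum n.
have sum_nondecr :
    {homo (fun n => \sum_(m <= j < n) a j) : p q / (p <= q)%N >-> p <= q}.
  apply/nondecreasing_seqP => p /=; have [m_le_p | p_lt_m] := leqP m p.
    by rewrite [leRHS]big_nat_recr //= lerDl a_ge0.
  by rewrite !big_geq // ltnW.
have := nondecreasing_cvgn_le sum_nondecr (cvgP _ a_sum) n.
by rewrite (cvg_lim _ a_sum).
Qed.

Theorem lemma4 (R : realType) (a : nat -> R)
  (a_ge0 : forall j, (1 <= j)%N -> 0 <= a j)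
  (a_sum : (\sum_(1 <= j < n) a j) @[n --> \oo] --> (1 : R)) :
  let s := sup [set a j | j in [set j : nat | (1 <= j)%N]] in
  (forall k i : nat, (2 <= k)%N -> (2 <= i <= k)%N ->
     comp_sum a k i <= (1 - a k) * s) /\
  (forall k i : nat, (1 <= k)%N -> (1 <= i <= k)%N ->
     comp_sum a k i <= s).
Proof.
move=> s.
have sum_le1 := partial_sum_le_lim a_ge0 a_sum.
have sum_ge0 n : 0 <= \sum_(1 <= j < n) a j.
  by rewrite big_nat sumr_ge0 // => j /andP[j_gt0 _]; apply: a_ge0.
have sum_below_le1B k : (0 < k)%N -> \sum_(1 <= j < k) a j <= 1 - a k.
  by move=> k_gt0; rewrite lerBrDr -big_nat_recr ?sum_le1.
have a_le1 j : (0 < j)%N -> a j <= 1.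
  by move=> j_gt0; apply: le_trans (sum_le1 j.+1); rewrite big_nat_recr //= lerDr sum_ge0.
have a_le_s j : (0 < j)%N -> a j <= s.
  move=> j_gt0; apply: ub_le_sup; last by exists j.
  by exists 1 => _ [j' j'_gt0 <-]; apply: a_le1.
have s_ge0 : 0 <= s by apply: le_trans (a_ge0 1%N isT) (a_le_s 1%N isT).
split=> k [|i] k_gt /andP[i_ge _] //;
  apply: le_trans (comp_sum_le a_ge0 a_le_s k i) _.
- case: i i_ge => [|i] // _; rewrite mulrC ler_wpM2r //.
  apply: le_trans _ (sum_below_le1B k (ltnW k_gt)).
  by rewrite exprS; apply: ler_piMr; rewrite ?exprn_ile1 ?sum_ge0 ?sum_le1.
- by apply: ler_piMr; rewrite ?exprn_ile1 ?sum_ge0 ?sum_le1.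
Qed.
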